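(* Let $n$ be a prime. For every nonnegative integer $s < n-1$, \[ \sum_{k=1}^{n-1-s} \frac{1}{k}\binom{k+s}{s} \equiv -\sum_{k=1}^{n-1-s} \frac{1}{k} \pmod{n}. \] In particular, if $n>2$, then $\sum_{k=1}^{n-1} \frac{1}{k} \equiv 0 \pmod{n}$.
   Context: For $1\le k\le n-1$, $\frac{1}{k}$ denotes the multiplicative inverse of $k$ modulo $n$ (equivalently, the congruences are congruences of rationals with denominators prime to $n$). *)

From mathcomp Require Import all_boot all_algebra.

From mathcomp Require Import all_boot all_algebra.
From mathcomp Require Import ring zify.
Import GRing.Theory.
Local Open Scope ring_scope.

(* First, if m + s + 1 = 0 in a domain where 1, ..., m are
   invertible, then C(k + s, k) = (-1)^k C(m, k): both sides are
   (s + 1) ... (s + k) / k!, and s + j = j - (m + 1).  Second, over any field in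
   which 1, ..., m are invertible, sum_(k = 1..m) (-1)^k C(m, k) / k = -H_m, by
   induction on m via Pascal's rule.  For s = 0 the congruence reads H = -H. *)

Lemma sum_alt_bin (R : pzRingType) m :
  \sum_(k < m.+2) (-1) ^+ k * 'C(m.+1, k)%:R = 0 :> R.
Proof.
have := exprD1n (-1 : R) m.+1; rewrite addNr expr0n /= => alt; rewrite [RHS]alt.
by apply: eq_bigr => k _; rewrite mulr_natr.
Qed.

Lemma natr_bin_upper_negation (R : idomainType) m s k :
    (m + s).+1%:R = 0 :> R -> (forall i, (0 < i <= k)%N -> i%:R != 0 :> R) ->
    (k <= m)%N ->
  'C(k + s, k)%:R = (-1) ^+ k * 'C(m, k)%:R :> R.
Proof.
move=> char_ms; elim: k => [|k IHk] k_unit le_k_m; first by rewrite !bin0 expr0 mul1r.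
have k1_neq0 : k.+1%:R != 0 :> R := k_unit k.+1 (leqnn k.+1).
apply: (mulfI k1_neq0).
have m_sub_k : (m - k)%:R = - (k + s).+1%:R :> R.
  by apply/eqP; rewrite -addr_eq0 -natrD -char_ms; apply/eqP; congr _%:R; lia.
rewrite -natrM -mul_bin_diag addSn natrM IHk; first last.
- exact: ltnW.
- by move=> i /andP[i_gt0 le_ik]; apply: k_unit; rewrite i_gt0 leqW.
rewrite [RHS]mulrCA -natrM mul_bin_left natrM m_sub_k exprS.
ring.
Qed.

Lemma natr_bin_absorption (F : fieldType) m k :
    k.+1%:R != 0 :> F -> m.+1%:R != 0 :> F ->
  k.+1%:R^-1 * 'C(m, k)%:R = m.+1%:R^-1 * 'C(m.+1, k.+1)%:R :> F.
Proof.
move=> k1_neq0 m1_neq0.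
have diag : m.+1%:R * 'C(m, k)%:R = k.+1%:R * 'C(m.+1, k.+1)%:R :> F.
  by rewrite -!natrM mul_bin_diag.
by rewrite -[X in _ = _ * X](mulKf k1_neq0) -diag mulrA mulrAC mulrC mulKf.
Qed.

Lemma sum_alt_bin_harmonic (F : fieldType) m :
    (forall k, (0 < k <= m)%N -> k%:R != 0 :> F) ->
  \sum_(1 <= k < m.+1) k%:R^-1 * ((-1) ^+ k * 'C(m, k)%:R)
    = - \sum_(1 <= k < m.+1) k%:R^-1 :> F.
Proof.
elim: m => [|m IHm] m_unit; first by rewrite !big_geq ?oppr0.
have m1_neq0 : m.+1%:R != 0 :> F := m_unit m.+1 (leqnn m.+1).
rewrite [in RHS]big_nat_recr //= opprD -IHm; last first.
  by move=> k /andP[k_gt0 le_k_m]; apply: m_unit; rewrite k_gt0 leqW.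
rewrite big_add1 /=.
under eq_big_nat => k /andP[_ lt_k_m1] do
  rewrite binS natrD !mulrDr [X in _ + X]mulrCA
          (natr_bin_absorption _ _ _ (m_unit k.+1 lt_k_m1) m1_neq0).
rewrite big_split /= big_nat_recr //= bin_small // !mulr0 addr0 [in RHS]big_add1.
congr (_ + _).
have alt : \sum_(0 <= k < m.+1) (-1) ^+ k.+1 * 'C(m.+1, k.+1)%:R = -1 :> F.
  have := sum_alt_bin F m; rewrite big_ord_recl expr0 mul1r => /eqP.
  by rewrite addrC addr_eq0 big_mkord => /eqP.
under eq_bigr do rewrite mulrCA.
by rewrite -big_distrr /= alt mulrN1.
Qed.

Lemma sum_invn_bin_char (F : fieldType) m s :
    (m + s).+1%:R = 0 :> F -> (forall k, (0 < k <= m)%N -> k%:R != 0 :> F) ->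
  \sum_(1 <= k < m.+1) k%:R^-1 * 'C(k + s, s)%:R
    = - \sum_(1 <= k < m.+1) k%:R^-1 :> F.
Proof.
move=> char_ms m_unit; rewrite -sum_alt_bin_harmonic //.
apply: eq_big_nat => k /andP[k_gt0 le_k_m]; congr (_ * _).
rewrite -[s in 'C(_, s)](addKn k) bin_sub ?leq_addr //.
apply: natr_bin_upper_negation => // i /andP[i_gt0 le_i_k].
by apply: m_unit; rewrite i_gt0 (leq_trans le_i_k).
Qed.

Lemma Fp_natr_neq0 (p k : nat) : prime p -> (0 < k < p)%N -> k%:R != 0 :> 'F_p.
Proof.
move=> p_pr /andP[k_gt0 lt_k_p].
by rewrite -(dvdn_pcharf (pchar_Fp p_pr)) gtnNdvd.
Qed.

Theorem theorem4p1 (n : nat) (hn : prime n) :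
  (forall s : nat, (s < n.-1)%N ->
     \sum_(1 <= k < (n - s)%N) ((k%:R)^-1 * ('C(k + s, s))%:R : 'F_n)
     = - \sum_(1 <= k < (n - s)%N) ((k%:R)^-1 : 'F_n))
  /\ ((2 < n)%N -> \sum_(1 <= k < n) ((k%:R)^-1 : 'F_n) = 0).
Proof.
have n_gt0 := prime_gt0 hn.
have harmonic_congr s : (s < n.-1)%N ->
    \sum_(1 <= k < (n - s)%N) ((k%:R)^-1 * ('C(k + s, s))%:R : 'F_n)
    = - \sum_(1 <= k < (n - s)%N) ((k%:R)^-1 : 'F_n).
  move=> lt_s_n1; have -> : (n - s)%N = (n.-1 - s).+1 by lia.
  apply: sum_invn_bin_char => [|k /andP[k_gt0 le_k_m]].
    by rewrite (_ : _.+1 = n) ?pchar_Fp_0 //; lia.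
  by apply: Fp_natr_neq0; lia.
split=> // n_gt2.
have two_neq0 : 2%:R != 0 :> 'F_n by apply: Fp_natr_neq0; lia.
have := harmonic_congr 0%N ltac:(lia); rewrite subn0.
under eq_big_nat => k _ do rewrite addn0 bin0 mulr1.
move/eqP; rewrite -addr_eq0 -mulr2n -mulr_natr mulf_eq0 (negbTE two_neq0) orbF.
by move/eqP.
Qed.
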